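(* Let $N$ and $i$ be positive integers such that $N$ is a multiple of both $i$ and $i+1$, and let $q$ be an integer with $N/(i+1)<q\le N/i$ (necessarily $q\ge 2$). Then the map $$F_i\to F_N^{1/q,\,1/(q-1)},\qquad \frac{h}{k}\mapsto \frac{k}{kq-h}$$ (with $h/k$ in lowest terms) is a well-defined, order-preserving bijection.
   Context: For a positive integer $N$, the Farey sequence of order $N$, $F_N$, is the increasing list of all reduced fractions $h/k$ with $0\le h\le k\le N$ and $\gcd(h,k)=1$; it begins with $0/1$ and ends with $1/1$. For integers $1\le b\le a\le N$, $F_N^{1/a,\,1/b}$ denotes the subsequence of $F_N$ consisting of all its fractions lying in the closed interval $[1/a,\,1/b]$. *)

(* Farey fractions are represented as rationals (type rat);
   the reduced form h/k of r is numq r / denq r. *)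
From HB Require Import structures.
From mathcomp Require Import all_boot all_order all_algebra.
Set Implicit Arguments. Unset Strict Implicit. Unset Printing Implicit Defensive.
Import Order.TTheory GRing.Theory Num.Theory.
Local Open Scope ring_scope.

Definition farey (N : nat) (r : rat) : bool :=
  (0 <= r <= 1) && (denq r <= N%:Z).

Definition farey_sub (N : nat) (a b : int) (r : rat) : bool :=
  farey N r && ((a%:~R)^-1 <= r <= (b%:~R)^-1).

Definition farey_map (q : int) (r : rat) : rat :=
  (denq r)%:~R / ((denq r * q - numq r)%:~R).

(* The map is [r |-> 1/(q - r)], an increasing bijection from [0, 1] onto
   [1/q, 1/(q-1)] with inverse [t |-> q - 1/t].  If [r = h/k] then the image
   is [k/(kq - h)], whose reduced denominator is at most [kq <= iq <= N].
   Conversely, if [t = a/b] is reduced with [b <= N], then [q - 1/t] has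
   denominator at most [a], and [a(q-1) < b <= N <= (i+1)(q-1)] unless
   [t = 1/(q-1)]; this last inequality is where [(i+1) | N] is used. *)
From HB Require Import structures.
From mathcomp Require Import all_boot all_order all_algebra.
From mathcomp Require Import zify ring lra.
Import Order.TTheory GRing.Theory Num.Theory.
Local Open Scope ring_scope.

Lemma farey_map_denE (q : int) (r : rat) :
  ((denq r * q - numq r)%:~R : rat) = (denq r)%:~R * (q%:~R - r).
Proof. by rewrite rmorphB rmorphM /= numqE; ring. Qed.

Lemma farey_mapE (q : int) (r : rat) : farey_map q r = (q%:~R - r)^-1.
Proof.
have den_neq0 : ((denq r)%:~R : rat) != 0 by rewrite intr_eq0 denq_neq0.
by rewrite /farey_map farey_map_denE invfM mulrA mulfV // mul1r.
Qed.

Lemma denq_le_of_mul_int (x : rat) (d z : int) :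
  0 < d -> x * d%:~R = z%:~R -> denq x <= d.
Proof.
move=> d_gt0 xdE.
have numM : numq x * d = z * denq x.
  by apply/eqP; rewrite -(eqr_int rat) !rmorphM /= numqE -xdE; apply/eqP; ring.
have cop : coprimez (denq x) (numq x).
  by rewrite coprimez_sym coprimezE coprime_num_den.
have /dvdzP [k dE] : (denq x %| d)%Z.
  by rewrite -(Gauss_dvdzr _ cop) numM dvdz_mull.
have k_gt0 : 0 < k by rewrite -(pmulr_lgt0 _ (denq_gt0 x)) -dE.
by rewrite dE ler_peMl // ltW.
Qed.

Lemma denq_farey_map_le (q : int) (r : rat) :
  r < q%:~R -> denq (farey_map q r) <= denq r * q - numq r.
Proof.
move=> r_lt_q.
have pos : 0 < denq r * q - numq r.
  by rewrite -(ltr_int rat) farey_map_denE mulr_gt0 ?ltr0z ?denq_gt0 ?subr_gt0.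
apply: (@denq_le_of_mul_int _ _ (denq r) pos).
by rewrite /farey_map mulrVK // unitfE intr_eq0 gt_eqF.
Qed.

Lemma denq_sub_inv_le (q : int) (t : rat) :
  0 < t -> denq (q%:~R - t^-1) <= numq t.
Proof.
move=> t_gt0; apply: (@denq_le_of_mul_int _ _ (q * numq t - denq t)).
  by rewrite numq_gt0.
have t_neq0 : t != 0 by rewrite gt_eqF.
by rewrite rmorphB rmorphM /= numqE; field.
Qed.

Lemma farey_map_lt (q : int) (r s : rat) :
  r < s -> s < q%:~R -> farey_map q r < farey_map q s.
Proof.
by move=> rs sq; rewrite !farey_mapE ltf_pV2 ?posrE ?subr_gt0 ?ltrD2l ?ltrN2 //; lra.
Qed.

Lemma farey_map_bounds (q : int) (r : rat) : 1 < q -> 0 <= r <= 1 ->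
  (q%:~R)^-1 <= farey_map q r <= ((q - 1)%:~R)^-1.
Proof.
move=> q_gt1 /andP [r_ge0 r_le1].
have q_gt1r : (1 : rat) < q%:~R by rewrite -[1]/(1%:~R) ltr_int.
rewrite farey_mapE rmorphB /=.
by rewrite !lef_pV2 ?posrE ?subr_gt0 //; lra.
Qed.

Lemma farey_mapK (q : int) (t : rat) : farey_map q (q%:~R - t^-1) = t.
Proof. by rewrite farey_mapE opprB addrC subrK invrK. Qed.

Lemma mulr_le_of_le_div (n d : nat) (q : int) :
  (0 < d)%N -> (q%:~R : rat) <= n%:R / d%:R -> d%:Z * q <= n%:Z.
Proof.
move=> d_gt0 qle; rewrite -(ler_int rat) rmorphM /= mulrC.
by rewrite -ler_pdivlMr ?ltr0n.
Qed.

Lemma le_mul_pred_of_div_lt (n d : nat) (q : int) :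
  (d %| n)%N -> (0 < d)%N -> (n%:R / d%:R : rat) < q%:~R -> n%:Z <= d%:Z * (q - 1).
Proof.
move=> /dvdnP [k ->] d_gt0; rewrite natrM mulfK ?pnatr_eq0 -?lt0n //.
by rewrite -[k%:R]/(k%:~R) ltr_int => kq; rewrite PoszM; nia.
Qed.

Section FareyMap.

Variables (N i : nat) (q : int).
Hypothesis q_gt1 : 1 < q.

Let q_gt1_rat : (1 : rat) < q%:~R.
Proof. by rewrite -[1]/(1%:~R) ltr_int. Qed.

Lemma farey_map_farey_sub (r : rat) : i%:Z * q <= N%:Z ->
  farey i r -> farey_sub N q (q - 1) (farey_map q r).
Proof.
move=> iq_le_N /andP [r01 den_r].
have /andP [r_ge0 r_le1] := r01.
have r_lt_q : r < q%:~R by rewrite (le_lt_trans r_le1).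
have bounds := @farey_map_bounds q r q_gt1 r01.
have /andP [map_ge0 map_le1] := bounds.
rewrite /farey_sub /farey bounds andbT -andbA.
apply/and3P; split.
- by rewrite (le_trans _ map_ge0) // invr_ge0 ler0z; lia.
- by rewrite (le_trans map_le1) // invf_le1 ?ler1z ?ltr0z; lia.
- apply: (le_trans (@denq_farey_map_le q r r_lt_q)).
  have num_ge0 : 0 <= numq r by rewrite numq_ge0.
  have : denq r * q <= i%:Z * q by rewrite ler_wpM2r //; lia.
  lia.
Qed.

Lemma farey_sub_farey_map (t : rat) : (0 < i)%N -> N%:Z <= i.+1%:Z * (q - 1) ->
  farey_sub N q (q - 1) t -> exists2 r, farey i r & farey_map q r = t.
Proof.
move=> i_gt0 N_le /andP [/andP [_ den_t] /andP [qt tq]].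
have q_gt1r := q_gt1_rat.
rewrite rmorphB /= in tq.
have t_gt0 : 0 < t by rewrite (lt_le_trans _ qt) // invr_gt0; lra.
have ti_ge : q%:~R - 1 <= t^-1 by rewrite -lef_pV2 ?invrK ?posrE ?invr_gt0 //; lra.
have ti_le : t^-1 <= q%:~R by rewrite -lef_pV2 ?invrK ?posrE ?invr_gt0 //; lra.
exists (q%:~R - t^-1); last exact: farey_mapK.
rewrite /farey; apply/andP; split; first by apply/andP; split; lra.
have [->|t_neq] := eqVneq t ((q%:~R - 1)^-1).
  by rewrite invrK opprB addrC subrK -[1]/(1%:~R) denq_int; lia.
apply: (le_trans (@denq_sub_inv_le q t t_gt0)).
have tq_lt : t * (q%:~R - 1) < 1.
  by rewrite -ltr_pdivlMr ?subr_gt0 // div1r lt_neqAle t_neq.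
have num_lt : numq t * (q - 1) < denq t.
  rewrite -(ltr_int rat) rmorphM rmorphB /= numqE -mulrA mulrCA.
  by rewrite gtr_pMr ?ltr0z ?denq_gt0.
have : numq t * (q - 1) < i.+1%:Z * (q - 1) by lia.
by rewrite ltr_pM2r ?subr_gt0 //; lia.
Qed.

End FareyMap.

Theorem theorem2 (N i : nat) (q : int) :
  (0 < N)%N -> (0 < i)%N -> (i %| N)%N -> (i.+1 %| N)%N ->
  (N%:R / i.+1%:R : rat) < q%:~R -> (q%:~R : rat) <= N%:R / i%:R ->
  [/\ (forall r, farey i r -> farey_sub N q (q - 1) (farey_map q r)),
      (forall r s, farey i r -> farey i s -> r < s ->
                   farey_map q r < farey_map q s)
    & (forall t, farey_sub N q (q - 1) t ->
                 exists2 r, farey i r & farey_map q r = t)].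
Proof.
move=> N_gt0 i_gt0 _ dvd_N q_gt q_le.
have iq_le_N := @mulr_le_of_le_div N i q i_gt0 q_le.
have N_le := @le_mul_pred_of_div_lt N i.+1 q dvd_N (ltn0Sn i) q_gt.
have q_gt1 : 1 < q by nia.
have q_gt1_rat : (1 : rat) < q%:~R by rewrite -[1]/(1%:~R) ltr_int.
split.
- by move=> r; apply: farey_map_farey_sub.
- move=> r s _ /andP [/andP [_ s_le1] _] rs.
  exact: farey_map_lt rs (le_lt_trans s_le1 q_gt1_rat).
- by move=> t; apply: farey_sub_farey_map.
Qed.
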